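(* Let $P\in\mathfrak N_2$ and let $r:P\to R$ be a retraction onto a retract $R$ of width three which is a tower of nice sections. Suppose $\ell\in[0,h_R-1]$ satisfies $R(\ell)<R(\ell+1)$, and suppose there is $k\in[0,h_P-1]$ such that either (a) $R(\ell)=P(k)$, or (b) $R(\ell)\subsetneq P(k)$, $P(k)\cup P(k+1)$ is of type $3C$, and $r[P(k+1)]\subseteq R(\ell+1\to h_R)$. Then $k\le h_P-3$, $P(k+1)\cup P(k+2)$ is of type $3C$, and $r[P(k+1)]=R(\ell+1)\subseteq P(k+2)$.
   Context: All posets are finite; $h_P$ is the height; level sets $P(0)=\min P$, $P(k+1)=\min(P\setminus\bigcup_{i\le k}P(i))$; $P(k\to\ell)=\bigcup_{i=k}^\ell P(i)$; level sets of $R$ refer to $R$'s own levels. $A<B$ means $a<b$ for all $a\in A,b\in B$. A retraction $r:P\to R$ is an idempotent order-preserving self-map with image $R$. Type $3C$: three disjoint 2-element chains, no further comparabilities. A section is either a 2-element antichain or a poset $P$ of height $h_P\ge1$ with carrier $\{c_{k,j}:k\in[0,h_P],j\in\{0,1,2\}\}$ such that: $c_{0,j}<\dots<c_{h_P,j}$ for each $j$; each $\{c_{k,0},c_{k,1},c_{k,2}\}$ is an antichain; $c_{k,i}<c_{\ell,j}\Rightarrow c_{k,i+1}<c_{\ell,j+1}$ (indices mod 3); and for no $k$ is $P(k)<P(k+1)$ with both 3-element. A section is nice if for all $x<y$: $\{z:z>x\}\not\subseteq\{z:z\ge y\}$ and $\{z:z<y\}\not\subseteq\{z:z\le x\}$.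 A tower of nice sections is an ordinal sum of nice sections. $\mathfrak N_2$ is the class of nice sections of width three of height $\ge2$ with horizon 2, i.e. $P(k)<P(\ell)$ whenever $\ell\ge k+2$; consecutive level pairs are 6-crowns or of type $3C$. *)

From mathcomp Require Import all_boot all_order.
Set Implicit Arguments. Unset Strict Implicit. Unset Printing Implicit Defensive.
Import Order.TTheory.
Local Open Scope order_scope.

(* Finite posets are finPOrderType's; a subset S : {set T} is viewed as a
   subposet with the induced order. *)
Section PosetDefs.
Context {d : Order.disp_t} {T : finPOrderType d}.

Definition setlt (A B : {set T}) : bool :=
  [forall a in A, forall b in B, a < b].

Definition minimal (S : {set T}) : {set T} :=
  [set x in S | [forall y in S, ~~ (y < x)]].

Fixpoint remlev (S : {set T}) (k : nat) : {set T} :=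
  if k is k'.+1 then remlev S k' :\: minimal (remlev S k') else S.

Definition lev (S : {set T}) (k : nat) : {set T} := minimal (remlev S k).

Definition levrange (S : {set T}) (a b : nat) : {set T} :=
  \bigcup_(a <= i < b.+1) lev S i.

(* height: largest index of a nonempty level (levels beyond #|T| are empty) *)
Definition height (S : {set T}) : nat :=
  \big[maxn/0%N]_(i < #|T|.+1 | lev S i != set0) (i : nat).

Definition antichain (S : {set T}) : bool :=
  [forall x in S, forall y in S, ~~ (x < y)].

Definition width (S : {set T}) : nat :=
  \big[maxn/0%N]_(A : {set T} | (A \subset S) && antichain A) #|A|.

(* type 3C: three disjoint 2-element chains, no further comparabilities *)
Definition is3C (A : {set T}) : Prop :=
  exists f : 'I_3 * bool -> T,
    injective f /\ A = [set f u | u : 'I_3 * bool] /\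
    forall u v, (f u < f v) = [&& u.1 == v.1, ~~ u.2 & v.2].

Definition isSection (S : {set T}) : Prop :=
  (#|S| = 2 /\ antichain S) \/
  (1 <= height S)%N /\
  exists c : nat -> 'I_3 -> T,
    let h := height S in
    S = [set c (k : nat) j | k : 'I_h.+1, j : 'I_3] /\
    (forall k l i j, (k <= h)%N -> (l <= h)%N -> c k i = c l j -> k = l /\ i = j) /\
    (forall k j, (k < h)%N -> c k j < c k.+1 j) /\
    (forall k i j, (k <= h)%N -> i != j -> ~~ (c k i < c k j)) /\
    (forall k l i j, (k <= h)%N -> (l <= h)%N ->
        c k i < c l j -> c k (ordS i) < c l (ordS j)) /\
    ~ (exists k, (k < h)%N /\ #|lev S k| = 3 /\ #|lev S k.+1| = 3 /\
                 setlt (lev S k) (lev S k.+1)).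

Definition nice (S : {set T}) : Prop :=
  forall x y, x \in S -> y \in S -> x < y ->
    ~~ ([set z in S | x < z] \subset [set z in S | y <= z]) /\
    ~~ ([set z in S | z < y] \subset [set z in S | z <= x]).

Definition niceSection (S : {set T}) : Prop := isSection S /\ nice S.

Definition towerNice (S : {set T}) : Prop :=
  exists Q : seq {set T},
    S = \bigcup_(A <- Q) A /\
    (forall A, A \in Q -> niceSection A) /\
    (forall i j, (i < j)%N -> (j < size Q)%N -> setlt (nth set0 Q i) (nth set0 Q j)).

Definition inN2 (S : {set T}) : Prop :=
  niceSection S /\ width S = 3 /\ (2 <= height S)%N /\
  (forall k l, (k.+2 <= l)%N -> setlt (lev S k) (lev S l)).

Definition retraction (r : T -> T) (R : {set T}) : Prop :=
  (forall x, r (r x) = r x) /\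
  (forall x y, x <= y -> r x <= r y) /\
  R = [set r x | x : T].

End PosetDefs.

(* In a section of width three the levels are the rows [c p] of three parallel
   chains, and by horizon 2 rows two apart are completely comparable.  With
   A = R(l) inside row k and B = R(l+1), each of the hypotheses (a), (b) keeps B
   off row k+1 and sends r[row k+1] to levels of R above l; in case (a) this uses
   that in a tower of nice sections a full level lying below the next one has,
   for each of its elements, an element of the previous level not below it.
   As B is an antichain with at least two elements, r maps every element of
   row k+1 lying below some b in B to b.  This confines B to row k+2 and makes r
   map row k+1 onto B.  A comparability between different chains from row k+1 to
   row k+2 would, by the cyclic symmetry of the section, put one element of row
   k+1 below two elements of B; hence rows k+1 and k+2 form a 3C, and niceness at
   c(k+1,0) < c(k+2,0) shows that row k+2 is not the top row. *)

From mathcomp Require Import all_boot all_order zify.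
Set Implicit Arguments. Unset Strict Implicit. Unset Printing Implicit Defensive.
Import Order.TTheory.
Local Open Scope order_scope.

Section Levels.
Context {d : Order.disp_t} {T : finPOrderType d}.
Implicit Types (S : {set T}) (x y z : T).

Lemma minimal_sub S : minimal S \subset S.
Proof. by apply/subsetP => x; rewrite inE => /andP[]. Qed.

Lemma minimalP S x :
  reflect (x \in S /\ forall y, y \in S -> ~~ (y < x)) (x \in minimal S).
Proof. by rewrite inE; apply: (iffP andP) => -[-> /forall_inP]. Qed.

Lemma minimal_below S y : y \in S -> exists2 w, w \in minimal S & w <= y.
Proof.
move=> yS; pose below w := [set z in S | z < w].
have yP : (y \in S) && (y <= y) by rewrite yS lexx.
have [w /andP[wS wy] w_min] :=
  @arg_minnP T y (fun w => (w \in S) && (w <= y)) (fun w => #|below w|) yP.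
exists w => //; apply/minimalP; split => // z zS; apply/negP => zw.
have /w_min : (z \in S) && (z <= y) by rewrite zS (le_trans (ltW zw) wy).
apply/negP; rewrite -ltnNge; apply: proper_card; apply/properP; split.
  by apply/subsetP => t; rewrite !inE => /andP[-> /lt_trans]; apply.
by exists z; rewrite !inE ?zS ?zw ?ltxx.
Qed.

Lemma minimal_eq0 S : (minimal S == set0) = (S == set0).
Proof.
apply/eqP/eqP => [min0|->]; last by apply/eqP; rewrite -subset0 minimal_sub.
apply/setP => y; rewrite inE; apply/negP => /minimal_below[w].
by rewrite min0 inE.
Qed.

Lemma remlev_sub S k : remlev S k \subset S.
Proof. by elim: k => //= k; apply: subset_trans (subsetDl _ _). Qed.

Lemma remlevD S a b : remlev S (a + b) = remlev (remlev S a) b.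
Proof. by elim: b => [|b /= <-]; rewrite ?addn0 ?addnS. Qed.

Lemma remlev_decr S k m : (k <= m)%N -> remlev S m \subset remlev S k.
Proof. by move=> /subnKC <-; rewrite remlevD remlev_sub. Qed.

Lemma lev_sub_remlev S k : lev S k \subset remlev S k.
Proof. exact: minimal_sub. Qed.

Lemma lev_sub S k : lev S k \subset S.
Proof. exact: subset_trans (lev_sub_remlev _ _) (remlev_sub _ _). Qed.

Lemma lev_set0 k : lev set0 k = set0 :> {set T}.
Proof. by apply/eqP; rewrite -subset0 lev_sub. Qed.

Lemma lev_lt S m n x y : x \in lev S m -> y \in lev S n -> x < y -> (m < n)%N.
Proof.
move=> xm /minimalP[_ y_min] xy; rewrite ltnNge; apply/negP => nm.
have xn := subsetP (remlev_decr S nm) x (subsetP (lev_sub_remlev _ _) x xm).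
by have := y_min x xn; rewrite xy.
Qed.

Lemma lev_uniq S m n x : x \in lev S m -> x \in lev S n -> m = n.
Proof.
wlog mn : m n / (m <= n)%N => [hyp xm xn|xm xn].
  by case: (leqP m n) => [/hyp|/ltnW /hyp] => ->.
apply/eqP; rewrite eqn_leq mn leqNgt; apply/negP => /(remlev_decr S)/subsetP sub.
by have := sub x (subsetP (lev_sub_remlev _ _) x xn); rewrite /= inE xm.
Qed.

Lemma lev_le S m n x y : x \in lev S m -> y \in lev S n -> x <= y -> (m <= n)%N.
Proof.
move=> xm yn; rewrite le_eqVlt => /orP[/eqP xy|/(lev_lt xm yn)/ltnW //].
by rewrite (lev_uniq xm (_ : x \in lev S n)) // xy.
Qed.

Lemma lev_antichain S m x y : x \in lev S m -> y \in lev S m -> ~~ (x < y).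
Proof. by move=> xm ym; apply/negP => /(lev_lt xm ym); rewrite ltnn. Qed.

Lemma lev_le_eq S m x y : x \in lev S m -> y \in lev S m -> x <= y -> x = y.
Proof. by move=> xm ym; rewrite le_eqVlt (negbTE (lev_antichain xm ym)) orbF => /eqP. Qed.

Lemma lev_below_succ S m z : z \in lev S m.+1 -> exists2 w, w \in lev S m & w < z.
Proof.
move=> /minimalP[]; rewrite inE => /andP[z_nmin zm] _.
have /forall_inPn[y ym] : ~~ [forall y in remlev S m, ~~ (y < z)].
  by apply: contra z_nmin => z_min; apply/minimalP; split => // y /(forall_inP z_min).
rewrite negbK => yz; have [w wm wy] := minimal_below ym.
by exists w => //; apply: le_lt_trans wy yz.
Qed.

Lemma lev_below S m n z : (m <= n)%N -> z \in lev S n ->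
  exists2 w, w \in lev S m & w <= z.
Proof.
move=> /subnKC <-; elim: (n - m)%N z => [|i IH] z; first by rewrite addn0; exists z.
rewrite addnS => /lev_below_succ[w /IH[v vm vw] wz].
by exists v => //; apply: le_trans vw (ltW wz).
Qed.

Lemma remlev_card S m : remlev S m != set0 -> (m + #|remlev S m| <= #|S|)%N.
Proof.
elim: m => [|m IH] /=; first by rewrite add0n subset_leq_card.
set X := remlev S m => X'_neq0.
have X_neq0 : X != set0 by apply: contraNneq X'_neq0 => ->; rewrite set0D.
apply: leq_trans (IH X_neq0); rewrite addSn -addnS leq_add2l.
rewrite -(cardsID (minimal X) X) (setIidPr (minimal_sub _)) addnC -addn1 leq_add2l.
by rewrite card_gt0 minimal_eq0.
Qed.

Lemma remlev_large S : remlev S #|T|.+1 = set0.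
Proof.
apply/eqP/negPn/negP => /remlev_card; rewrite leqNgt => /negP; apply.
by apply: leq_trans (leq_addr _ _); rewrite ltnS max_card.
Qed.

Lemma lev_exists S z : z \in S -> exists m, z \in lev S m.
Proof.
have : z \notin remlev S #|T|.+1 by rewrite remlev_large inE.
elim: #|T|.+1 => [|n IH] /=; first by move/negbTE => ->.
by rewrite inE negb_and negbK => /orP[zn _|/IH//]; exists n.
Qed.

Lemma lev_neq0_small S m : lev S m != set0 -> (m < #|T|.+1)%N.
Proof.
rewrite ltnNge; apply: contraNN => /(remlev_decr S) sub.
by rewrite -subset0 -(remlev_large S) (subset_trans (lev_sub_remlev _ _) sub).
Qed.

Lemma height_ge S m : lev S m != set0 -> (m <= height S)%N.
Proof.
move=> m_neq0; rewrite /height.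
by apply: (@leq_bigmax_cond _ (fun i : 'I_#|T|.+1 => lev S i != set0)
  (fun i => i : nat) (Ordinal (lev_neq0_small m_neq0))).
Qed.

Lemma lev_down S m n : (m <= n)%N -> lev S n != set0 -> lev S m != set0.
Proof.
by move=> mn /set0Pn[z /(lev_below mn)[w wm _]]; apply/set0Pn; exists w.
Qed.

Lemma height_set0 : height (set0 : {set T}) = 0%N.
Proof. by rewrite /height big_pred0 // => i; rewrite lev_set0 eqxx. Qed.

Lemma lev_height_neq0 S : S != set0 -> lev S (height S) != set0.
Proof.
move=> S_neq0; have lev0 : lev S (@ord0 #|T|) != set0 by rewrite minimal_eq0.
rewrite /height (@bigop.bigmax_eq_arg _ _ (fun i : 'I_#|T|.+1 => lev S i != set0)
  (fun i => i : nat) lev0).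
by case: arg_maxnP.
Qed.

Lemma lev_eq0 S m : S != set0 -> (lev S m == set0) = (height S < m)%N.
Proof.
move=> S_neq0; apply/idP/idP; rewrite ltnNge; apply: contraLR; rewrite negbK.
  by move=> /lev_down; apply; apply: lev_height_neq0.
exact: height_ge.
Qed.

End Levels.

Section OrdinalSum.
Context {d : Order.disp_t} {T : finPOrderType d}.
Implicit Types (S X Y : {set T}) (x y : T).

Lemma setltP X Y : reflect (forall x y, x \in X -> y \in Y -> x < y) (setlt X Y).
Proof.
apply: (iffP forall_inP) => [XY x y xX|XY x xX]; first exact/forall_inP/XY.
by apply/forall_inP => y; apply: XY.
Qed.

Lemma setltSl X' X Y : X' \subset X -> setlt X Y -> setlt X' Y.
Proof.
by move=> /subsetP sub /setltP XY; apply/setltP => x y /sub; apply: XY.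
Qed.

Lemma setlt_disjoint X Y : setlt X Y -> [disjoint X & Y].
Proof.
move=> /setltP XY; rewrite -setI_eq0; apply/eqP/setP => x; rewrite !inE.
by apply/negP => /andP[xX xY]; have := XY x x xX xY; rewrite ltxx.
Qed.

Lemma setlt0r X : setlt X set0.
Proof. by apply/setltP => x y _; rewrite inE. Qed.

Lemma remlev_eq0 S n : S != set0 -> (remlev S n == set0) = (height S < n)%N.
Proof. by move=> S_neq0; rewrite -minimal_eq0 (lev_eq0 n S_neq0). Qed.

Lemma minimal_setU X Y : setlt X Y -> X != set0 -> minimal (X :|: Y) = minimal X.
Proof.
move=> /setltP XY /set0Pn[x0 x0X]; apply/setP => z; apply/minimalP/minimalP.
  move=> [zXY z_min]; have zX : z \in X.
    move: zXY; rewrite inE => /orP[//|zY].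
    by have := z_min x0; rewrite inE x0X (XY x0 z x0X zY) => /(_ isT).
  by split => // y yX; apply: z_min; rewrite inE yX.
move=> [zX z_min]; split; first by rewrite inE zX.
move=> y; rewrite inE => /orP[/z_min //|yY]; apply/negP => yz.
by have := lt_trans (XY z y zX yY) yz; rewrite ltxx.
Qed.

Lemma lev_setU X Y m : setlt X Y -> X != set0 ->
  lev (X :|: Y) m = if (m <= height X)%N then lev X m else lev Y (m - (height X).+1).
Proof.
move=> XY X_neq0; set N := (height X).+1.
have remU n : (n <= N)%N -> remlev (X :|: Y) n = remlev X n :|: Y.
  elim: n => // n IH nN; rewrite /= IH ?(ltnW nN) // minimal_setU; last 2 first.
  - exact: setltSl (remlev_sub _ _) XY.
  - by rewrite remlev_eq0 // -leqNgt.
  rewrite setDUl (setDidPl (_ : [disjoint Y & _])) //.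
  apply: disjointWr (subset_trans (minimal_sub _) (remlev_sub _ _)) _.
  by rewrite disjoint_sym setlt_disjoint.
case: ifP => mh.
  rewrite /lev remU ?(leq_trans mh) // minimal_setU //.
    exact: setltSl (remlev_sub _ _) XY.
  by rewrite remlev_eq0 // -leqNgt.
have Nm : (N <= m)%N by rewrite ltnNge mh.
have remX : remlev X N = set0 by apply/eqP; rewrite remlev_eq0.
by rewrite -{1}(subnKC Nm) /lev remlevD remU // remX set0U.
Qed.

(* The only two properties of a tower of nice sections that the proof uses. *)
Definition levels_nonsingleton S := forall m, lev S m != set0 -> (1 < #|lev S m|)%N.

Definition full_steps_uncovered S :=
  forall m, #|lev S m| = 3 -> setlt (lev S m) (lev S m.+1) ->
  (0 < m)%N /\ forall a, a \in lev S m -> exists2 a', a' \in lev S m.-1 & ~~ (a' < a).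

Lemma nonsingleton_setU X Y : setlt X Y -> X != set0 ->
  levels_nonsingleton X -> levels_nonsingleton Y -> levels_nonsingleton (X :|: Y).
Proof.
by move=> XY X0 gX gY m; rewrite lev_setU //; case: ifP => _; [apply: gX | apply: gY].
Qed.

Lemma uncovered_setU X Y : setlt X Y -> X != set0 ->
  full_steps_uncovered X -> full_steps_uncovered Y -> full_steps_uncovered (X :|: Y).
Proof.
move=> XY X0 gX gY m; rewrite !lev_setU //.
case: (leqP m (height X)) => mh.
  rewrite (leq_trans (leq_pred m) mh) => card3 step; apply: gX => //.
  move: step; case: ifP => // /negbT; rewrite -ltnNge => hm _.
  by move: (hm); rewrite -lev_eq0 // => /eqP ->; apply: setlt0r.
rewrite ifF; last lia; move=> card3.
have -> : (m.+1 - (height X).+1 = (m - (height X).+1).+1)%N by lia.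
move=> /(gY _ card3)[pos below]; split; first lia.
rewrite ifF; last lia.
by have -> : (m.-1 - (height X).+1 = (m - (height X).+1).-1)%N by lia.
Qed.

End OrdinalSum.

Lemma I3_rot (i j : 'I_3) : [\/ j = i, j = ordS i | j = ordS (ordS i)].
Proof.
by case: i => [[|[|[|?]]] ?] //; case: j => [[|[|[|?]]] ?] //;
  first [by apply: Or31; apply: val_inj | by apply: Or32; apply: val_inj
        | by apply: Or33; apply: val_inj].
Qed.

Lemma ordS3K (i : 'I_3) : ordS (ordS (ordS i)) = i.
Proof. by case: i => [[|[|[|?]]] ?] //; apply: val_inj. Qed.

Lemma ordS_homo_shift (R : rel 'I_3) (f : 'I_3 -> 'I_3) i :
  {homo @ordS 3 : x y / R x y} -> (forall x, f (ordS x) = ordS (f x)) ->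
  R i (f i) -> forall x, R x (f x).
Proof.
move=> R_homo fS Ri x.
by case: (I3_rot i x) => ->; rewrite ?fS //; do 2?apply: (R_homo).
Qed.

Lemma ordS_homo_total (R : rel 'I_3) i j x y :
  {homo @ordS 3 : a b / R a b} -> R i j -> i != j -> x != y -> R x y || R y x.
Proof.
move=> R_homo Rij ij xy.
have [Ej|Ej|Ej] := I3_rot i j; first by rewrite Ej eqxx in ij.
- rewrite Ej in Rij.
  have R1 := ordS_homo_shift (f := @ordS 3) R_homo (fun _ => erefl) Rij.
  have [Ey|Ey|Ey] := I3_rot x y; first by rewrite Ey eqxx in xy.
    by rewrite Ey R1.
  by have := R1 y; rewrite Ey ordS3K => ->; rewrite orbT.
- rewrite Ej in Rij.
  have R2 := ordS_homo_shift (f := fun a => ordS (ordS a)) R_homo (fun _ => erefl) Rij.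
  have [Ey|Ey|Ey] := I3_rot x y; first by rewrite Ey eqxx in xy.
    by have := R2 y; rewrite Ey ordS3K => ->; rewrite orbT.
  by rewrite Ey R2.
Qed.

Section Rows.
Context {d : Order.disp_t} {T : finPOrderType d}.
Variables (h : nat) (c : nat -> 'I_3 -> T).
Hypothesis c_inj : forall k l i j, (k <= h)%N -> (l <= h)%N ->
  c k i = c l j -> k = l /\ i = j.
Hypothesis c_chain : forall k j, (k < h)%N -> c k j < c k.+1 j.
Hypothesis c_row_antichain : forall k i j, (k <= h)%N -> i != j -> ~~ (c k i < c k j).

Definition row k : {set T} := [set c k j | j : 'I_3].

Lemma chain_le k l j : (k <= l <= h)%N -> c k j <= c l j.
Proof.
move=> /andP[/subnKC <-]; elim: (l - k)%N => [|n IH] kn; first by rewrite addn0.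
by rewrite addnS in kn *; apply: le_trans (IH (ltnW kn)) (ltW (c_chain _ kn)).
Qed.

Lemma chain_lt k l j : (k < l <= h)%N -> c k j < c l j.
Proof.
move=> /andP[kl lh].
by apply: (lt_le_trans (c_chain j (leq_trans kl lh))); apply: chain_le; rewrite kl.
Qed.

Lemma row_ltF k i j : (k <= h)%N -> (c k i < c k j) = false.
Proof.
move=> kh; have [->|ij] := eqVneq i j; first exact: ltxx.
exact: negbTE (c_row_antichain kh ij).
Qed.

Lemma row_lt k l i j : (k <= h)%N -> (l <= h)%N -> c k i < c l j -> (k < l)%N.
Proof.
move=> kh lh cij; rewrite ltnNge; apply/negP => lk.
have : c l i < c l j by apply: le_lt_trans _ cij; apply: chain_le; rewrite lk.
by rewrite row_ltF.
Qed.

Lemma row_card k : (k <= h)%N -> #|row k| = 3.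
Proof. by move=> kh; rewrite card_imset ?card_ord // => i j /c_inj[]. Qed.

Hypothesis c_cyclic : forall k l i j, (k <= h)%N -> (l <= h)%N ->
  c k i < c l j -> c k (ordS i) < c l (ordS j).

Lemma row_full_step k j : (k < h)%N -> (forall i, c k i < c k.+1 j) ->
  setlt (row k) (row k.+1).
Proof.
move=> kh below_j; have below_S j' : (forall i, c k i < c k.+1 j') ->
    forall i, c k i < c k.+1 (ordS j').
  by move=> below i; rewrite -(ord_predK i); apply: c_cyclic => //; apply: ltnW.
apply/setltP => _ _ /imsetP[i _ ->] /imsetP[j' _ ->].
case: (I3_rot j j') => ->; first exact: below_j.
  exact: (below_S j below_j i).
exact: (below_S _ (below_S j below_j) i).
Qed.

Variable S : {set T}.
Hypothesis S_rows : S = [set c (k : nat) j | k : 'I_h.+1, j : 'I_3].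

Definition rows_from k : {set T} := \bigcup_(p : 'I_h.+1 | (k <= p)%N) row p.

Lemma rows_fromP k x :
  reflect (exists p j, [/\ k <= p, p <= h & x = c p j]%N) (x \in rows_from k).
Proof.
apply: (iffP bigcupP) => [[p kp /imsetP[j _ ->]]|[p [j [kp ph ->]]]].
  by exists (p : nat), j; split => //; rewrite -ltnS.
by exists (Ordinal (ph : p < h.+1)%N) => //; apply: imset_f.
Qed.

Lemma remlev_rows k : remlev S k = rows_from k.
Proof.
elim: k => [|k IH].
  apply/setP => x; rewrite /= S_rows.
  apply/idP/rows_fromP => [/imset2P[p j _ _ ->]|[p [j [_ ph ->]]]].
    by exists (p : nat), j; split => //; rewrite -ltnS.
  by rewrite (_ : p = Ordinal (ph : p < h.+1)%N) // imset2_f.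
apply/setP => x; rewrite /= IH in_setD; apply/andP/rows_fromP.
  move=> [x_nmin /rows_fromP[p [j [kp ph Ex]]]]; exists p, j; split => //.
  rewrite ltn_neqAle kp andbT; apply: contraNneq x_nmin => Ep; apply/minimalP.
  split; first by apply/rows_fromP; exists p, j.
  move=> _ /rows_fromP[q [i [kq qh ->]]]; rewrite Ex -Ep.
  by apply/negP => /(row_lt qh (leq_trans kp ph)); rewrite ltnNge kq.
move=> [p [j [kp ph ->]]]; split; last first.
  by apply/rows_fromP; exists p, j; split => //; apply: ltnW.
have ckj : c k j \in rows_from k.
  by apply/rows_fromP; exists k, j; split => //; apply: ltnW (leq_trans kp ph).
by apply/minimalP => -[_ /(_ _ ckj)]; rewrite chain_lt ?kp.
Qed.

Lemma lev_rows k : (k <= h)%N -> lev S k = row k.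
Proof.
move=> kh; rewrite /lev remlev_rows; apply/setP => x; apply/minimalP/imsetP.
  move=> [/rows_fromP[p [j [kp ph ->]]] x_min]; exists j => //.
  suff -> : p = k by [].
  apply/eqP; rewrite eqn_leq kp andbT leqNgt; apply/negP => kp'.
  have ckj : c k j \in rows_from k by apply/rows_fromP; exists k, j.
  by have := x_min _ ckj; rewrite chain_lt ?kp'.
move=> [j _ ->]; split; first by apply/rows_fromP; exists k, j.
move=> _ /rows_fromP[q [i [kq qh ->]]].
by apply/negP => /(row_lt qh kh); rewrite ltnNge kq.
Qed.

Lemma lev_rows_gt k : (h < k)%N -> lev S k = set0.
Proof.
move=> hk; apply/eqP; rewrite -subset0 /lev remlev_rows.
apply/subsetP => x /minimalP[/rows_fromP[p [j [kp ph _]]] _].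
by have := leq_trans kp ph; rewrite leqNgt hk.
Qed.

Hypothesis S_nofull : ~ (exists k, (k < h)%N /\ #|lev S k| = 3 /\
  #|lev S k.+1| = 3 /\ setlt (lev S k) (lev S k.+1)).

Lemma rows_nofull k : (k < h)%N -> ~~ setlt (row k) (row k.+1).
Proof.
move=> kh; apply/negP => full; apply: S_nofull; exists k.
by rewrite !lev_rows ?row_card // ltnW.
Qed.

Lemma nonsingleton_rows : levels_nonsingleton S.
Proof.
move=> m; case: (leqP m h) => mh; first by rewrite lev_rows ?row_card.
by rewrite lev_rows_gt ?eqxx.
Qed.

Hypothesis h_gt0 : (0 < h)%N.

Lemma uncovered_rows : full_steps_uncovered S.
Proof.
move=> m; case: (ltngtP m h) => [mh|hm|->].
- rewrite (lev_rows (ltnW mh)) (lev_rows mh) => _ full.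
  by have := rows_nofull mh; rewrite full.
- by rewrite lev_rows_gt ?cards0.
rewrite lev_rows // => _ _; split => // _ /imsetP[j _ ->].
have hp : (h.-1 < h)%N by rewrite ltn_predL.
have : ~~ [forall i, c h.-1 i < c h.-1.+1 j].
  by apply: contra (rows_nofull hp) => /forallP; apply: row_full_step.
rewrite prednK // => /forallPn[i ni]; exists (c h.-1 i) => //.
by rewrite lev_rows ?leq_pred // imset_f.
Qed.

End Rows.

Section Towers.
Context {d : Order.disp_t} {T : finPOrderType d}.
Implicit Types (S : {set T}).

Lemma antichain_lev S : antichain S -> lev S 0 = S /\ forall m, lev S m.+1 = set0.
Proof.
move=> /forall_inP S_anti.
have minS : minimal S = S.
  apply/setP => x; apply/minimalP/idP => [[]//|xS]; split => // y yS.
  exact: (forall_inP (S_anti y yS)).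
split => [|m]; first by rewrite /lev /= minS.
rewrite /lev (remlevD S 1) /= minS setDv.
by apply/eqP; rewrite minimal_eq0 -subset0 remlev_sub.
Qed.

Lemma section_neq0 S : isSection S -> S != set0.
Proof.
case=> [[S2 _]|[_ [c [-> _]]]]; first by rewrite -card_gt0 S2.
by apply/set0Pn; exists (c 0%N ord0); apply/imset2P; exists ord0 ord0.
Qed.

Lemma section_props S : isSection S -> levels_nonsingleton S /\ full_steps_uncovered S.
Proof.
case=> [[S2 /antichain_lev[lev0 levS]]|[h_gt0 [c]]].
  by split => [[|m]|[|m]]; rewrite ?lev0 ?levS ?S2 ?cards0 ?eqxx.
set h := height S => -[S_rows [c_inj [c_chain [c_anti [c_cyclic S_nofull]]]]].
split => m; first exact: (nonsingleton_rows c_inj c_chain c_anti S_rows).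
exact: (uncovered_rows c_inj c_chain c_anti c_cyclic S_rows S_nofull h_gt0).
Qed.

Lemma tower_props (R : {set T}) :
  towerNice R -> levels_nonsingleton R /\ full_steps_uncovered R.
Proof.
move=> [Q [-> [Q_nice Q_lt]]]; elim: Q Q_nice Q_lt => [|A Q IH] Q_nice Q_lt.
  by rewrite big_nil; split => m; rewrite lev_set0 ?eqxx ?cards0.
have [A_sec _] : niceSection A by apply: Q_nice; rewrite inE eqxx.
have [IH1 IH2] : levels_nonsingleton (\bigcup_(B <- Q) B) /\
                 full_steps_uncovered (\bigcup_(B <- Q) B).
  apply: IH => [B BQ|i j ij jQ]; first by apply: Q_nice; rewrite inE BQ orbT.
  exact: (Q_lt i.+1 j.+1).
have A_lt : setlt A (\bigcup_(B <- Q) B).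
  apply/setltP => x y xA; rewrite bigcup_seq => /bigcupP[B BQ yB].
  have := Q_lt 0%N (index B Q).+1 isT; rewrite /= ltnS index_mem nth_index //.
  by move=> /(_ BQ) /setltP; apply.
have [A1 A2] := section_props A_sec; have A_neq0 := section_neq0 A_sec.
by rewrite big_cons; split; [apply: nonsingleton_setU | apply: uncovered_setU].
Qed.

End Towers.

Lemma is3C_below_uniq {d : Order.disp_t} {T : finPOrderType d} (U : {set T}) x y z :
  is3C U -> x \in U -> y \in U -> z \in U -> x < z -> y < z -> x = y.
Proof.
move=> [f [_ [-> f_lt]]] /imsetP[u _ ->] /imsetP[v _ ->] /imsetP[w _ ->].
rewrite !f_lt => /and3P[/eqP uw u2 _] /and3P[/eqP vw v2 _]; congr f.
by case: u uw u2 => u1 [] //= -> _; case: v vw v2 => v1 [] //= -> _.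
Qed.

Section RetractionOfRows.
Context {d : Order.disp_t} {T : finPOrderType d}.
Local Notation P := [set: T].
Variables (h : nat) (c : nat -> 'I_3 -> T).
Hypothesis P_rows : P = [set c (p : nat) j | p : 'I_h.+1, j : 'I_3].
Hypothesis c_inj : forall p q i j, (p <= h)%N -> (q <= h)%N ->
  c p i = c q j -> p = q /\ i = j.
Hypothesis c_chain : forall p j, (p < h)%N -> c p j < c p.+1 j.
Hypothesis c_row_antichain : forall p i j, (p <= h)%N -> i != j -> ~~ (c p i < c p j).
Hypothesis c_cyclic : forall p q i j, (p <= h)%N -> (q <= h)%N ->
  c p i < c q j -> c p (ordS i) < c q (ordS j).
Hypothesis P_nofull : ~ (exists p, (p < h)%N /\ #|lev P p| = 3 /\
  #|lev P p.+1| = 3 /\ setlt (lev P p) (lev P p.+1)).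
Hypothesis P_horizon : forall p q, (p.+2 <= q)%N -> setlt (lev P p) (lev P q).
Hypothesis P_nice : nice P.

Variables (r : T -> T) (R : {set T}).
Hypothesis r_retraction : retraction r R.
Hypothesis R_nonsingleton : levels_nonsingleton R.
Hypothesis R_uncovered : full_steps_uncovered R.

Variables (l k : nat).
Local Notation A := (lev R l).
Local Notation B := (lev R l.+1).
Hypothesis k_lt_h : (k < h)%N.
Hypothesis A_lt_B : setlt A B.
Hypothesis B_neq0 : B != set0.

Lemma c_onto x : exists p j, (p <= h)%N /\ x = c p j.
Proof.
have := in_setT x; rewrite P_rows => /imset2P[p j _ _ ->].
by exists (p : nat), j; split => //; rewrite -ltnS.
Qed.

Lemma lev_P p : (p <= h)%N -> lev P p = row c p.
Proof. exact: (lev_rows c_chain c_row_antichain P_rows). Qed.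

Lemma c_horizon p q i j : (p.+2 <= q)%N -> (q <= h)%N -> c p i < c q j.
Proof.
move=> pq qh; have ph : (p <= h)%N by apply: ltnW (ltnW (leq_trans pq qh)).
by apply: (setltP _ _ (P_horizon pq)); rewrite lev_P // imset_f.
Qed.

Lemma c_nofull p : (p < h)%N -> ~~ setlt (row c p) (row c p.+1).
Proof. exact: (rows_nofull c_inj c_chain c_row_antichain P_rows P_nofull). Qed.

Lemma r_mem x : r x \in R.
Proof. by case: r_retraction => _ [_ ->]; apply: imset_f. Qed.

Lemma r_id z : z \in R -> r z = z.
Proof. by case: r_retraction => r_idem [_ ->] /imsetP[x _ ->]; rewrite r_idem. Qed.

Lemma r_le x z : z \in R -> x <= z -> r x <= z.
Proof. by case: r_retraction => _ [r_mono _] zR /r_mono; rewrite (r_id zR). Qed.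

Lemma r_ge x z : z \in R -> z <= x -> z <= r x.
Proof. by case: r_retraction => _ [r_mono _] zR /r_mono; rewrite (r_id zR). Qed.

Lemma lev_R_mem m z : z \in lev R m -> z \in R.
Proof. exact/subsetP/lev_sub. Qed.

Lemma A_neq0 : A != set0.
Proof. exact: lev_down (leqnSn l) B_neq0. Qed.

Lemma B_off_next_row_of_eq : A = row c k -> forall j, c k.+1 j \notin B.
Proof.
move=> EA j; apply/negP => cB; move/negP: (c_nofull k_lt_h); apply.
apply: (row_full_step c_cyclic (j := j) k_lt_h) => i.
by apply: (setltP _ _ A_lt_B) => //; rewrite EA imset_f.
Qed.

Lemma B_off_next_row_of_3C : A \subset row c k ->
  is3C (row c k :|: row c k.+1) -> forall j, c k.+1 j \notin B.
Proof.
move=> A_sub U3C j; apply/negP => cB.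
have /card_gt1P[a1 [a2 [a1A a2A /eqP]]] := R_nonsingleton A_neq0; apply.
have inU a : a \in A -> a \in row c k :|: row c k.+1.
  by move=> /(subsetP A_sub) ak; rewrite inE ak.
have cU : c k.+1 j \in row c k :|: row c k.+1 by rewrite inE imset_f ?orbT.
by apply: (is3C_below_uniq U3C (inU _ a1A) (inU _ a2A) cU); apply: (setltP _ _ A_lt_B).
Qed.

(* Otherwise [r] folds [c (k+1) j] onto [c k j]; the element of level [l-1] not
   below [c k j] then fits in no row: rows below k lie under [c (k+1) j], rows
   from k on lie above [A]. *)
Lemma r_next_up_of_eq : A = row c k ->
  forall j, exists2 m, (l < m)%N & r (c k.+1 j) \in lev R m.
Proof.
move=> EA j; have [m xm] := lev_exists (r_mem (c k.+1 j)); exists m => //.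
rewrite ltnNge; apply/negP => ml.
have a0A : c k j \in A by rewrite EA imset_f.
have a0x : c k j <= r (c k.+1 j).
  exact: r_ge (lev_R_mem a0A) (ltW (c_chain j k_lt_h)).
have Em : m = l by apply/eqP; rewrite eqn_leq ml (lev_le a0A xm a0x).
rewrite Em in xm; have rx := lev_le_eq a0A xm a0x.
have A3 : #|A| = 3 by rewrite EA (row_card c_inj) // ltnW.
have [l_gt0 /(_ _ a0A)[a' a'A' a'_nlt]] := R_uncovered A3 A_lt_B.
have [p [i [ph Ea']]] := c_onto a'; rewrite {}Ea' in a'A' a'_nlt.
case: (ltnP p k) => [pk|kp].
  have : c p i <= c k j.
    by rewrite rx; apply: r_ge (lev_R_mem a'A') (ltW (c_horizon _ _ _ k_lt_h)).
  rewrite le_eqVlt (negbTE a'_nlt) orbF => /eqP Ea'.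
  by rewrite Ea' in a'A'; have := lev_uniq a'A' a0A; lia.
have ckiA : c k i \in A by rewrite EA imset_f.
have : c k i <= c p i by apply: (chain_le c_chain); rewrite kp.
by move/(lev_le ckiA a'A'); lia.
Qed.

Lemma r_next_up_of_levrange n : r @: row c k.+1 \subset levrange R l.+1 n ->
  forall j, exists2 m, (l < m)%N & r (c k.+1 j) \in lev R m.
Proof.
move=> /subsetP sub j; have /sub : r (c k.+1 j) \in r @: row c k.+1 by rewrite !imset_f.
by rewrite /levrange big_geq_mkord => /bigcupP[m /andP[_ lm] rm]; exists m.
Qed.

Section NextRows.
Hypothesis A_sub_row : A \subset row c k.
Hypothesis B_off_next_row : forall j, c k.+1 j \notin B.
Hypothesis r_next_up : forall j, exists2 m, (l < m)%N & r (c k.+1 j) \in lev R m.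

Lemma B_rows_above p j : (p <= h)%N -> c p j \in B -> (k.+2 <= p)%N.
Proof.
move=> ph cB; have /set0Pn[a aA] := A_neq0.
have /imsetP[i _ Ea] := subsetP A_sub_row a aA.
have kp : (k < p)%N.
  have := setltP _ _ A_lt_B a _ aA cB; rewrite Ea.
  exact: (row_lt c_chain c_row_antichain (ltnW k_lt_h) ph).
rewrite ltn_neqAle kp andbT; apply/eqP => Ep.
by rewrite -Ep (negbTE (B_off_next_row j)) in cB.
Qed.

Lemma below_B b : b \in B -> exists i, c k.+1 i < b.
Proof.
move=> bB; have [p [i [ph Eb]]] := c_onto b; rewrite Eb in bB *; exists i.
by apply: (chain_lt c_chain); rewrite (B_rows_above ph bB) ph.
Qed.

(* [r x] lies in a level above [A], hence above some element of [B]; being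
   also below [b], it is [b] since [B] is an antichain. *)
Lemma r_next_row_eq j b : b \in B -> c k.+1 j < b -> r (c k.+1 j) = b.
Proof.
move=> bB xb; have [m lm xm] := r_next_up j.
have [b' b'B b'x] := lev_below lm xm.
have rxb : r (c k.+1 j) <= b by apply: r_le (lev_R_mem bB) (ltW xb).
have b'b := lev_le_eq b'B bB (le_trans b'x rxb).
by apply/eqP; rewrite eq_le rxb -b'b b'x.
Qed.

Lemma B_sub_row : B \subset row c k.+2.
Proof.
apply/subsetP => b bB; have [p [j [ph Eb]]] := c_onto b; rewrite Eb in bB *.
move: (B_rows_above ph bB); rewrite leq_eqVlt => /orP[/eqP <-|kp]; first exact: imset_f.
have r_all i : r (c k.+1 i) = c p j := r_next_row_eq bB (c_horizon i j kp ph).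
have /card_gt1P[b1 [b2 [b1B b2B]]] := R_nonsingleton B_neq0.
have [i1 lt1] := below_B b1B; have [i2 lt2] := below_B b2B.
by rewrite -(r_next_row_eq b1B lt1) -(r_next_row_eq b2B lt2) !r_all eqxx.
Qed.

Lemma k2_le_h : (k.+2 <= h)%N.
Proof.
have /set0Pn[b bB] := B_neq0; have [p [j [ph Eb]]] := c_onto b.
by rewrite Eb in bB; apply: leq_trans (B_rows_above ph bB) ph.
Qed.

Lemma r_next_row_in_B j : r (c k.+1 j) \in B.
Proof.
have [m lm xm] := r_next_up j; have [<- //|m_neq] := eqVneq m l.+1.
have lm2 : (l.+2 <= m)%N by lia.
have C_neq0 : lev R l.+2 != set0.
  by apply: lev_down lm2 _; apply/set0Pn; exists (r (c k.+1 j)).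
suff : lev R l.+2 \subset [set r (c k.+1 j)].
  by move/subset_leq_card; rewrite cards1 leqNgt R_nonsingleton.
apply/subsetP => w wC; rewrite inE eq_sym.
have [b bB bw] := lev_below (leqnSn l.+1) wC.
have /imsetP[jb _ Eb] := subsetP B_sub_row b bB.
have [q [i [qh Ew]]] := c_onto w.
have bw_lt : b < w.
  rewrite lt_neqAle bw andbT; apply: contraTneq wC => <-.
  by apply/negP => /(lev_uniq bB); lia.
have kq : (k.+2 < q)%N.
  by move: bw_lt; rewrite Eb Ew; apply: (row_lt c_chain c_row_antichain k2_le_h qh).
have xw : c k.+1 j < w by rewrite Ew c_horizon.
have := r_le (lev_R_mem wC) (ltW xw).
by rewrite le_eqVlt => /orP[// | /(lev_lt xm wC)]; lia.
Qed.

Lemma r_next_row : r @: row c k.+1 = B.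
Proof.
apply/eqP; rewrite eqEsubset; apply/andP; split.
  by apply/subsetP => _ /imsetP[_ /imsetP[j _ ->] ->]; apply: r_next_row_in_B.
apply/subsetP => b bB; have /imsetP[j _ Eb] := subsetP B_sub_row b bB.
have xb : c k.+1 j < b by rewrite Eb c_chain ?k2_le_h.
by rewrite -(r_next_row_eq bB xb) !imset_f.
Qed.

(* By the cyclic symmetry, a comparability between different chains would put
   one element of row [k+1] below two distinct elements of [B]. *)
Lemma next_rows_lt_eq i j : c k.+1 i < c k.+2 j -> i = j.
Proof.
move=> lt_ij; apply/eqP/negPn/negP => ij.
have /card_gt1P[b1 [b2 [b1B b2B b12]]] := R_nonsingleton B_neq0.
have /imsetP[j1 _ E1] := subsetP B_sub_row b1 b1B.
have /imsetP[j2 _ E2] := subsetP B_sub_row b2 b2B.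
have j12 : j1 != j2 by apply: contraNneq b12; rewrite E1 E2 => ->.
have two x : c k.+1 x < b1 -> c k.+1 x < b2 -> False.
  move=> lt1 lt2; move: b12.
  by rewrite -(r_next_row_eq b1B lt1) -(r_next_row_eq b2B lt2) eqxx.
have homo : {homo @ordS 3 : a b / [rel a b | c k.+1 a < c k.+2 b] a b}.
  by move=> a b; apply: c_cyclic (ltnW k2_le_h) k2_le_h.
case/orP: (ordS_homo_total homo lt_ij ij j12) => /= lt12.
  by apply: (two j1); rewrite ?E1 ?E2 ?c_chain ?k2_le_h.
by apply: (two j2); rewrite ?E1 ?E2 ?c_chain ?k2_le_h.
Qed.

(* If row [k+2] were the top row, everything above [c (k+1) 0] would lie above
   [c (k+2) 0], against niceness. *)
Lemma k3_le_h : (k.+3 <= h)%N.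
Proof.
rewrite ltn_neqAle k2_le_h andbT; apply/eqP => Eh.
have [not_up _] :=
  P_nice (in_setT (c k.+1 ord0)) (in_setT (c k.+2 ord0)) (c_chain ord0 k2_le_h).
move/negP: not_up; apply; apply/subsetP => z; rewrite !inE /= => xz.
have [q [i [qh Ez]]] := c_onto z; rewrite Ez in xz *.
have kq := row_lt c_chain c_row_antichain (ltnW k2_le_h) qh xz.
have Eq : q = k.+2 by lia.
by rewrite Eq in xz *; rewrite -(next_rows_lt_eq xz).
Qed.

Lemma next_rows_3C : is3C (row c k.+1 :|: row c k.+2).
Proof.
pose f (u : 'I_3 * bool) := c (k.+1 + u.2) u.1.
have f_le (b : bool) : (k.+1 + b <= h)%N.
  by have := k2_le_h; case: b; rewrite ?addn0 ?addn1; lia.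
exists f; split; [|split].
- move=> [i a] [j b] /(c_inj (f_le a) (f_le b))[/addnI Eab /= ->].
  by move: Eab; case: a; case: b.
- apply/setP => z; rewrite inE; apply/orP/imsetP.
    case=> /imsetP[j _ ->]; [exists (j, false) | exists (j, true)] => //.
      by rewrite /f /= addn0.
    by rewrite /f /= addn1.
  by case=> -[j []] _ ->; [right | left]; rewrite /f /= ?addn0 ?addn1 imset_f.
- move=> [i []] [j []]; rewrite /f /= ?addn0 ?addn1 ?andbF ?andbT.
  + exact: (row_ltF c_row_antichain _ _ k2_le_h).
  + apply/negbTE/negP => lt_ij.
    by have := row_lt c_chain c_row_antichain k2_le_h (ltnW k2_le_h) lt_ij; lia.
  + by apply/idP/eqP => [/next_rows_lt_eq //|->]; apply: c_chain k2_le_h.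
  + exact: (row_ltF c_row_antichain _ _ (ltnW k2_le_h)).
Qed.

End NextRows.

Lemma next_levels n :
  (A = lev P k \/
   [/\ A \proper lev P k, is3C (lev P k :|: lev P k.+1)
     & r @: lev P k.+1 \subset levrange R l.+1 n]) ->
  [/\ (k + 3 <= h)%N, is3C (lev P k.+1 :|: lev P k.+2),
      r @: lev P k.+1 = B & B \subset lev P k.+2].
Proof.
rewrite (lev_P (ltnW k_lt_h)) (lev_P k_lt_h) => entry.
have A_sub : A \subset row c k by case: entry => [->|[/proper_sub]].
have [B_off r_up] : (forall j, c k.+1 j \notin B) /\
    (forall j, exists2 m, (l < m)%N & r (c k.+1 j) \in lev R m).
  case: entry => [EA|[_ U3C r_sub]]; split.
  - exact: B_off_next_row_of_eq.
  - exact: r_next_up_of_eq.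
  - exact: B_off_next_row_of_3C.
  - exact: r_next_up_of_levrange r_sub.
have k2h := k2_le_h A_sub B_off.
rewrite (lev_P k2h) addn3; split.
- exact: k3_le_h A_sub B_off r_up.
- exact: next_rows_3C A_sub B_off r_up.
- exact: r_next_row A_sub B_off r_up.
- exact: B_sub_row A_sub B_off r_up.
Qed.

End RetractionOfRows.

Unset Implicit Arguments.

Theorem lemma5p3 (d : Order.disp_t) (T : finPOrderType d)
  (r : T -> T) (R : {set T}) (l k : nat) :
  inN2 [set: T] ->
  retraction r R ->
  width R = 3 ->
  towerNice R ->
  (l < height R)%N ->
  setlt (lev R l) (lev R l.+1) ->
  (k < height [set: T])%N ->
  (lev R l = lev [set: T] k \/
   [/\ lev R l \proper lev [set: T] k,
       is3C (lev [set: T] k :|: lev [set: T] k.+1)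
     & r @: lev [set: T] k.+1 \subset levrange R l.+1 (height R)]) ->
  [/\ (k + 3 <= height [set: T])%N,
      is3C (lev [set: T] k.+1 :|: lev [set: T] k.+2),
      r @: lev [set: T] k.+1 = lev R l.+1
    & lev R l.+1 \subset lev [set: T] k.+2].
Proof.
move=> [[P_sec P_nice] [_ [h2 hor]]] r_retr _ /tower_props[R1 R2] lh A_lt_B kh.
case: P_sec => [[P2 /antichain_lev[_ lev_succ]]|[_ [c]]].
  have := @lev_height_neq0 _ _ [set: T].
  by rewrite -card_gt0 P2 -(ltn_predK h2) lev_succ eqxx => /(_ isT).
set h := height [set: T] => -[P_rows [c_inj [c_chain [c_anti [c_cyclic P_nofull]]]]].
have R_neq0 : R != set0 by apply: contraTneq lh => ->; rewrite height_set0.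
have B_neq0 : lev R l.+1 != set0 by rewrite lev_eq0 // -leqNgt.
exact: (next_levels P_rows c_inj c_chain c_anti c_cyclic P_nofull hor P_nice
  r_retr R1 R2 kh A_lt_B B_neq0).
Qed.
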